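(* Let $(p,f)$ be an SCF-RT that is rationalizable within the class of all RUM-CFs, and let $(x,y)\in D$. Put $q=p(x,y)/p(y,x)$. If $F(y,x)$ $q$-FSD $F(x,y)$, then every RUM-CF $(u,g,r)$ that rationalizes $(p,f)$ satisfies $u(x)\geq u(y)$ (i.e. $(p,f)$ reveals a preference for $x$ over $y$). If $F(y,x)$ $q$-SFSD $F(x,y)$, then every RUM-CF that rationalizes $(p,f)$ satisfies $u(x)>u(y)$ (a revealed strict preference for $x$ over $y$).
   Context: $X$ is a finite set of options; $C=\{(x,y): x,y\in X,\ x\neq y\}$; $D\subseteq C$ is a fixed non-empty set with $(x,y)\in D\Rightarrow (y,x)\in D$. A stochastic choice function (SCF) $p$ assigns to each $(x,y)\in D$ a number $p(x,y)>0$ with $p(x,y)+p(y,x)=1$ (probability of choosing $x$ from $\{x,y\}$). An SCF with response times (SCF-RT) is a pair $(p,f)$ where $p$ is an SCF and $f$ assigns to each $(x,y)\in D$ a strictly positive probability density $f(x,y)$ on $\mathbb{R}^+$ (response time density conditional on choosing $x$ from $\{x,y\}$), with cdf $F(x,y)$. A random utility model (RUM) is a pair $(u,g)$ with $u:X\to\mathbb{R}$ and $g$ assigning to each $(x,y)\in C$ a density $g(x,y)$ on $\mathbb{R}$ (cdf $G(x,y)$) such that: $\int v\,g(x,y)(v)\,dv=u(x)-u(y)$; $g(x,y)(v)=g(y,x)(-v)$ for all $v$; and the support of $g(x,y)$ is connected. A RUM with a chronometric function (RUM-CF) is a triple $(u,g,r)$ where $(u,g)$ is a RUM and $r:\mathbb{R}^{++}\to\mathbb{R}^+$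 is continuous, strictly decreasing on the set where $r(v)>0$, with $\lim_{v\to0}r(v)=\infty$ and $\lim_{v\to\infty}r(v)=0$; $r^{-1}(t)$ for $t>0$ denotes the inverse of the restriction of $r$ to $\{v: r(v)>0\}$. A RUM-CF $(u,g,r)$ rationalizes an SCF-RT $(p,f)$ if for all $(x,y)\in D$: $G(x,y)(0)=p(y,x)$, and $\frac{1-G(x,y)(r^{-1}(t))}{1-G(x,y)(0)}=F(x,y)(t)$ for all $t>0$. For cdfs $G,H$ on $\mathbb{R}^+$ and a constant $q>0$, $G$ $q$-FSD $H$ means $G(t)\leq q\,H(t)$ for all $t\geq0$; $G$ $q$-SFSD $H$ means additionally the inequality is strict for some $t$. *)

From HB Require Import structures.
From mathcomp Require Import all_boot all_order all_algebra.
From mathcomp Require Import all_classical all_reals all_analysis.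
Set Implicit Arguments. Unset Strict Implicit. Unset Printing Implicit Defensive.
Import Order.TTheory GRing.Theory Num.Theory.
Import numFieldNormedType.Exports.
Local Open Scope classical_set_scope.
Local Open Scope ring_scope.

Section Defs.
Variable R : realType.
Notation mu := (@lebesgue_measure R).

Definition is_density (h : R -> R) : Prop :=
  [/\ measurable_fun setT h, (forall v, 0 <= h v) &
      (\int[mu]_(v in setT) (h v)%:E = 1)%E].

Definition cdf (h : R -> R) (t : R) : R :=
  fine (\int[mu]_(v in `]-oo, t]) (h v)%:E).

Definition is_pos_density_Rplus (h : R -> R) : Prop :=
  [/\ measurable_fun (`[0%R, +oo[ : set R) h, (forall t, 0 <= t -> 0 < h t) &
      (\int[mu]_(t in `[0%R, +oo[) (h t)%:E = 1)%E].

Definition cdf_Rplus (h : R -> R) (t : R) : R :=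
  fine (\int[mu]_(s in `[0, t]) (h s)%:E).

Definition support (h : R -> R) : set R :=
  [set v : R | forall e : R, 0 < e -> (0 < \int[mu]_(w in `](v - e)%R, (v + e)%R[) (h w)%:E)%E].

Variable X : finType.

Definition is_SCF (D : X -> X -> Prop) (p : X -> X -> R) : Prop :=
  forall x y, D x y -> 0 < p x y /\ p x y + p y x = 1.

Definition is_SCF_RT (D : X -> X -> Prop) (p : X -> X -> R)
    (f : X -> X -> R -> R) : Prop :=
  is_SCF D p /\ forall x y, D x y -> is_pos_density_Rplus (f x y).

(* RUM: g defined on C = pairs of distinct options *)
Definition is_RUM (u : X -> R) (g : X -> X -> R -> R) : Prop :=
  forall x y, x <> y ->
    [/\ is_density (g x y),
        mu.-integrable setT (fun v => (v * g x y v)%:E),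
        (\int[mu]_(v in setT) (v * g x y v)%:E = (u x - u y)%:E)%E,
        (forall v, g x y v = g y x (- v)) &
        connected (support (g x y))].

Definition is_chronometric (r : R -> R) : Prop :=
  [/\ {within `]0, +oo[, continuous r},
      (forall v, 0 < v -> 0 <= r v),
      (forall v w, 0 < v -> v < w -> 0 < r v -> 0 < r w -> r w < r v),
      r v @[v --> 0^'+] --> +oo &
      r v @[v --> +oo] --> 0].

Definition is_RUM_CF (u : X -> R) (g : X -> X -> R -> R) (r : R -> R) : Prop :=
  is_RUM u g /\ is_chronometric r.

(* (u,g,r) rationalizes (p,f).  r^{-1}(t), t > 0, is the unique v > 0 with
   r v = t (v then lies in {v | r v > 0}); we quantify over such v. *)
Definition rationalizes (D : X -> X -> Prop) (u : X -> R)
    (g : X -> X -> R -> R) (r : R -> R) (p : X -> X -> R)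
    (f : X -> X -> R -> R) : Prop :=
  forall x y, D x y ->
    cdf (g x y) 0 = p y x /\
    forall t v, 0 < t -> 0 < v -> r v = t ->
      (1 - cdf (g x y) v) / (1 - cdf (g x y) 0) = cdf_Rplus (f x y) t.

Definition qFSD (q : R) (G H : R -> R) : Prop :=
  forall t, 0 <= t -> G t <= q * H t.

Definition qSFSD (q : R) (G H : R -> R) : Prop :=
  qFSD q G H /\ exists t, 0 <= t /\ G t < q * H t.

End Defs.

(* By the symmetry g(x,y)(v) = g(y,x)(-v), the mean u(x) - u(y) of g(x,y) is the
   difference of the positive-part first moments of g(x,y) and g(y,x), and by the
   layer-cake formula each of these is the integral over s > 0 of the survival
   function s |-> P(V > s).  Rationalization identifies the survival functions at
   any s with r(s) = t > 0 as p(x,y) F(x,y)(t) and p(y,x) F(y,x)(t), so q-FSD says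
   precisely that the survival function of g(y,x) lies below that of g(x,y); where
   r(s) = 0 the survival function of g(y,x) vanishes, being bounded by F(y,x)(t)
   for arbitrarily small t.  Integrating over s gives u(x) >= u(y).  Under q-SFSD
   the inequality is strict at some s0 > 0, hence, by right continuity of survival
   functions, on an interval to the right of s0, and u(x) > u(y). *)

From Pilot Require Import Defs.
From mathcomp Require Import all_boot all_order all_algebra.
From mathcomp Require Import all_classical all_reals all_analysis.
From mathcomp Require Import measurable_realfun.
From mathcomp Require Import lra.
Set Implicit Arguments.
Unset Strict Implicit.
Unset Printing Implicit Defensive.

Import Order.TTheory GRing.Theory Num.Theory.
Import numFieldNormedType.Exports.
Local Open Scope classical_set_scope.
Local Open Scope ring_scope.

Lemma near_at_right_itv {R : realType} (x : R) (P : R -> Prop) :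
  (\forall y \near x^'+, P y) ->
  exists2 d, 0 < d & forall y, x < y -> y < x + d -> P y.
Proof.
rewrite near_withinE => /nbhs_ballP [e /= e0 xeP]; exists e => // y xy yxe.
apply: xeP => //=; rewrite /ball /= ltr_distlC yxe andbT ltrBlDr.
by rewrite (lt_trans xy) // ltrDl.
Qed.

Lemma ler_ratioM {R : numFieldType} (a b c d : R) : 0 < b ->
  (c <= a / b * d) = (b * c <= a * d).
Proof. by move=> b0; rewrite mulrAC ler_pdivlMr // mulrC. Qed.

Lemma ltr_ratioM {R : numFieldType} (a b c d : R) : 0 < b ->
  (c < a / b * d) = (b * c < a * d).
Proof. by move=> b0; rewrite mulrAC ltr_pdivlMr // mulrC. Qed.

Section survival.
Context {R : realType}.
Local Notation mu := (@lebesgue_measure R).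
Implicit Types (h : R -> R) (a b s t v : R).

Lemma parameterized_integral_cvg_at_right h a b : a < b ->
  mu.-integrable `[a, b] (EFin \o h) ->
  parameterized_integral mu a t h @[t --> a^'+] --> 0.
Proof.
move=> ab ih.
have /(continuous_within_itvP _ ab) [_ + _] :=
  parameterized_integral_continuous (ltW ab) ih.
by rewrite /parameterized_integral set_itv1 Rintegral_set1.
Qed.

Lemma cdf_Rplus_cvg0 h : is_pos_density_Rplus h ->
  cdf_Rplus h t @[t --> 0^'+] --> 0.
Proof.
case=> mh h0 h1; apply: (@parameterized_integral_cvg_at_right h 0 1) => //.
have ih : mu.-integrable `[0%R, +oo[ (EFin \o h).
  apply/integrableP; split; first exact/measurable_EFinP.
  under eq_integral => s.
    rewrite inE /= in_itv /= andbT => /h0 /ltW h0s.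
    rewrite /= ger0_norm //.
    over.
  by rewrite h1 ltry.
apply: integrableS ih => //.
by move=> s /=; rewrite !in_itv /= andbT => /andP [].
Qed.

Lemma cdf_Rplus0 h : cdf_Rplus h 0 = 0.
Proof. by rewrite /cdf_Rplus set_itv1; exact: Rintegral_set1. Qed.

Local Open Scope ereal_scope.

Definition survival h s : \bar R := \int[mu]_(v in `]s, +oo[) (h v)%:E.

Section nonnegative.
Variable h : R -> R.
Hypotheses (mh : measurable_fun setT h) (h0 : forall v, (0 <= h v)%R).

Lemma survival_ge0 s : 0 <= survival h s.
Proof. by apply: integral_ge0 => v _; rewrite lee_fin. Qed.

Lemma le_survival s s' : (s <= s')%R -> survival h s' <= survival h s.
Proof.
move=> ss'; apply: ge0_subset_integral => //.
- by apply/measurable_EFinP; exact: measurable_funTS.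
- by move=> v _; rewrite lee_fin.
- by move=> v /=; rewrite !in_itv /= !andbT; exact: le_lt_trans.
Qed.

Lemma survival_le_integralD s s' : (s <= s')%R ->
  survival h s <= \int[mu]_(v in `[s, s']) (h v)%:E + survival h s'.
Proof.
move=> ss'; have hE0 v : 0 <= (h v)%:E by rewrite lee_fin.
rewrite /survival -ge0_integral_setU //; last 2 first.
- by apply/measurable_EFinP; exact: measurable_funTS.
- apply/disj_setPS => v [] /=; rewrite !in_itv /= andbT => /andP [_ vs'] s'v.
  by move: (le_lt_trans vs' s'v); rewrite ltxx.
apply: ge0_subset_integral => //.
- exact: measurableU.
- by apply/measurable_EFinP; exact: measurable_funTS.
- move=> v /=; rewrite !in_itv /= !andbT => sv.
  by case: (leP v s') => vs'; [left; rewrite (ltW sv) | right].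
Qed.

End nonnegative.

Section density.
Variable h : R -> R.
Hypothesis hd : is_density h.

Lemma density_integrable : mu.-integrable setT (EFin \o h).
Proof.
case: hd => mh h0 h1; apply/integrableP; split; first exact/measurable_EFinP.
under eq_integral do rewrite /= ger0_norm //.
by rewrite h1 ltry.
Qed.

Lemma cdf_add_survival s :
  \int[mu]_(v in `]-oo, s]) (h v)%:E + survival h s = 1.
Proof.
case: hd => mh h0 <-; rewrite -(itv_setU_setT false s) ge0_integral_setU //.
- by rewrite itv_setU_setT; exact/measurable_EFinP.
- by move=> v _; rewrite lee_fin.
- apply/disj_setPS => v [] /=; rewrite !in_itv /= andbT => vs sv.
  by move: (le_lt_trans vs sv); rewrite ltxx.
Qed.

Lemma survival_fin_num s : survival h s \is a fin_num.
Proof.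
have [mh h0 _] := hd.
rewrite ge0_fin_numE ?survival_ge0 //; apply: (@le_lt_trans _ _ 1); last exact: ltry.
rewrite -(cdf_add_survival s) leeDr //.
by apply: integral_ge0 => v _; rewrite lee_fin.
Qed.

(* Unqualified, [cdf] would be the cdf of a random variable from probability.v. *)
Lemma cdf_survival s : (1 - Defs.cdf h s)%R = fine (survival h s).
Proof.
have := cdf_add_survival s; rewrite /Defs.cdf.
have [mh h0 _] := hd.
set A := \int[mu]_(v in _) _ => AS.
have Afin : A \is a fin_num.
  rewrite ge0_fin_numE; last by apply: integral_ge0 => v _; rewrite lee_fin.
  rewrite (@le_lt_trans _ _ 1) ?ltry // -AS leeDl //; exact: survival_ge0.
have : (fine A + fine (survival h s))%R = 1%R.
  by apply: EFin_inj; rewrite EFinD !fineK ?survival_fin_num.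
lra.
Qed.

Lemma measurable_survival : measurable_fun setT (survival h).
Proof.
have [mh h0 _] := hd.
apply: (eq_measurable_fun (EFin \o (fine \o survival h))).
  by move=> s _ /=; rewrite fineK // survival_fin_num.
apply/measurable_EFinP; apply: nonincreasing_measurable => // s s' ss'.
by rewrite /= fine_le ?survival_fin_num // le_survival.
Qed.

Lemma survival_near_right v e : (0 < e)%R ->
  \forall s \near v^'+, (fine (survival h v) - e < fine (survival h s))%R.
Proof.
move=> e0; have [mh h0 _] := hd.
have vv1 : (v < v + 1)%R by rewrite ltrDl.
have ih : mu.-integrable `[v, (v + 1)%R] (EFin \o h).
  exact: integrableS density_integrable.
have /cvgrPdist_lt /(_ e e0) PIe := parameterized_integral_cvg_at_right vv1 ih.
apply: filterS2 (nbhs_right_ge v) PIe => s vs.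
rewrite sub0r normrN /parameterized_integral.
have ivs : mu.-integrable `[v, s] (EFin \o h).
  exact: integrableS density_integrable.
set I := \int[mu]_(t in `[v, s]) (h t)%:E.
have I0 : (0 <= fine I)%R.
  by apply: fine_ge0; apply: integral_ge0 => t _; rewrite lee_fin.
have : (fine (survival h v) <= fine I + fine (survival h s))%R.
  rewrite -lee_fin EFinD !fineK ?survival_fin_num ?(integral_fune_fin_num _ ivs) //.
  exact: survival_le_integralD.
rewrite /Rintegral -/I ger0_norm //; lra.
Qed.
End density.

Lemma integral_scale_indic_itv (e a d : R) : (0 <= e)%R -> (0 <= a)%R -> (0 < d)%R ->
  \int[mu]_(s in `]0%R, +oo[) (e * \1_`]a, (a + d)%R[ s)%:E = (e * d)%:E.
Proof.
move=> e0 a0 d0; have mI : measurable `]a, (a + d)%R[%classic by exact: measurable_itv.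
under eq_integral do rewrite EFinM.
rewrite ge0_integralZl ?lee_fin //; last first.
  by apply/measurable_EFinP; exact: measurable_indic.
rewrite integral_indic // setIidl; last first.
  by move=> s /=; rewrite !in_itv /= andbT => /andP [/(le_lt_trans a0)].
have muI : mu `]a, (a + d)%R[%classic = d%:E.
  by rewrite lebesgue_measure_itv /= lte_fin ltrDl d0 -EFinD addrAC subrr add0r.
by rewrite [X in (_ * X)](_ : _ = d%:E) // EFinM.
Qed.

Section survival_order.
Variables h1 h2 : R -> R.
Hypotheses (hd1 : is_density h1) (hd2 : is_density h2).
Hypothesis le_h2h1 : forall s, (0 < s)%R -> survival h2 s <= survival h1 s.

Let ms1 : measurable_fun (`]0%R, +oo[ : set R) (survival h1).
Proof. exact: measurable_funTS (measurable_survival hd1). Qed.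

Let ms2 : measurable_fun (`]0%R, +oo[ : set R) (survival h2).
Proof. exact: measurable_funTS (measurable_survival hd2). Qed.

Lemma le_integral_survival :
  \int[mu]_(s in `]0%R, +oo[) survival h2 s <= \int[mu]_(s in `]0%R, +oo[) survival h1 s.
Proof.
have [_ h20 _] := hd2.
apply: ge0_le_integral => // [s _|s]; first exact: survival_ge0.
by rewrite /= in_itv /= andbT; exact: le_h2h1.
Qed.

(* The survival function of h1 is right continuous and that of h2 nonincreasing,
   so their gap at v0 persists on an interval ]v0, v0 + d[. *)
Lemma lt_integral_survival v0 : (0 < v0)%R -> survival h2 v0 < survival h1 v0 ->
  \int[mu]_(s in `]0%R, +oo[) survival h2 s \is a fin_num ->
  \int[mu]_(s in `]0%R, +oo[) survival h2 s < \int[mu]_(s in `]0%R, +oo[) survival h1 s.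
Proof.
move=> v00 lt_v0 finS2; have [mh2 h20 _] := hd2.
have fin1 := survival_fin_num hd1; have fin2 := survival_fin_num hd2.
set e := ((fine (survival h1 v0) - fine (survival h2 v0)) / 2)%R.
have e0 : (0 < e)%R by rewrite divr_gt0 // subr_gt0 fine_lt.
have [d d0 near_v0] := near_at_right_itv (survival_near_right hd1 v0 e0).
set I := `]v0, (v0 + d)%R[%classic.
have mI : measurable I by exact: measurable_itv.
have le_bump s : (0 < s)%R -> survival h2 s + (e * \1_I s)%:E <= survival h1 s.
  move=> s0; rewrite indicE; case: (boolP (s \in I)) => [|_]; last first.
    by rewrite mulr0 adde0 le_h2h1.
  rewrite mem_setE /= in_itv /= => /andP [v0s sd].
  have := near_v0 s v0s sd.
  have : (fine (survival h2 s) <= fine (survival h2 v0))%R.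
    by rewrite fine_le // (le_survival mh2 h20 (ltW v0s)).
  rewrite -(fineK (fin1 s)) -(fineK (fin2 s)) -EFinD lee_fin mulr1 /e; lra.
have bumpE := integral_scale_indic_itv (ltW e0) (ltW v00) d0.
apply: (@lt_le_trans _ _ (\int[mu]_(s in `]0%R, +oo[) survival h2 s + (e * d)%:E)).
  by rewrite lteDl // lte_fin mulr_gt0.
rewrite -bumpE -ge0_integralD //; last 3 first.
- by move=> s _; exact: survival_ge0.
- by move=> s _; rewrite lee_fin mulr_ge0 // ltW.
- by apply/measurable_EFinP; apply: measurable_funM => //; exact: measurable_indic.
apply: ge0_le_integral => //.
- by move=> s _; rewrite adde_ge0 ?survival_ge0 // lee_fin mulr_ge0 // ltW.
- by apply: emeasurable_funD => //; apply/measurable_EFinP; apply: measurable_funM.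
- by move=> s; rewrite /= in_itv /= andbT; exact: le_bump.
Qed.

End survival_order.
End survival.

Section moment.
Context {R : realType}.
Local Notation mu := (@lebesgue_measure R).
Local Open Scope ereal_scope.

Definition pos_moment (h : R -> R) : \bar R :=
  \int[mu]_(v in `[0%R, +oo[) (v * h v)%:E.

Section layer_cake.
Variable h : R -> R.
Hypotheses (mh : measurable_fun setT h) (h0 : forall v, (0 <= h v)%R).

Let A := (fun sv : R * R => (0 < sv.1)%R && (sv.1 < sv.2)%R) @^-1` [set true].

Let inA sv : (sv \in A) = (0 < sv.1)%R && (sv.1 < sv.2)%R.
Proof. by apply/asboolP/idP. Qed.

Let mA : measurable A.
Proof.
rewrite -[A]setTI; apply: (measurable_and _ _) => //.
- exact: (measurable_fun_ltr (f := cst 0%R)) measurable_fst.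
- exact: measurable_fun_ltr measurable_fst measurable_snd.
Qed.

Let F (sv : R * R) := (\1_A sv * h sv.2)%:E.

Let mF : measurable_fun setT F.
Proof.
apply/measurable_EFinP; apply: measurable_funM; first exact: measurable_indic.
exact: measurableT_comp mh measurable_snd.
Qed.

Let F0 sv : 0 <= F sv.
Proof. by rewrite lee_fin mulr_ge0. Qed.

Let integral_F_snd s : \int[mu]_v F (s, v) = (survival h \_ `]0%R, +oo[) s.
Proof.
rewrite patchE mem_setE /= in_itv /= andbT; case: ifPn => s0; last first.
  by apply: integral0_eq => v _; rewrite /F indicE inA (negbTE s0) mul0r.
rewrite /survival [RHS]integral_mkcond; apply: eq_integral => v _.
rewrite /F indicE inA s0 patchE mem_setE /= in_itv /= andbT.
by case: (s < v)%R; rewrite ?mul1r ?mul0r.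
Qed.

Let integral_F_fst v : \int[mu]_s F (s, v) = ((fun v => (v * h v)%:E) \_ `[0%R, +oo[) v.
Proof.
transitivity (\int[mu]_s ((\1_`]0%R, v[ s)%:E * (h v)%:E)).
  by apply: eq_integral => s _; rewrite /F indicE inA indicE mem_setE /= in_itv /= EFinM.
rewrite ge0_integralZr ?lee_fin //; last first.
  by apply/measurable_EFinP; exact: measurable_indic.
have mu0v : mu `]0%R, v[%classic = if (0 < v)%R then v%:E else 0.
  by rewrite lebesgue_measure_itv /= lte_fin sube0.
rewrite integral_indic // setIT.
rewrite [X in X * _](_ : _ = if (0 < v)%R then v%:E else 0); last exact: mu0v.
rewrite patchE mem_setE /= in_itv /= andbT.
have [v0|v0] := ltrP 0 v; first by rewrite ltW // EFinM.
by rewrite mul0e; case: ifPn => // v0'; rewrite (@le_anti _ _ v 0%R) ?v0 ?mul0r.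
Qed.

Lemma pos_moment_survival :
  pos_moment h = \int[mu]_(s in `]0%R, +oo[) survival h s.
Proof.
transitivity (\int[mu]_v \int[mu]_s F (s, v)).
  by rewrite /pos_moment integral_mkcond; apply: eq_integral => v _; rewrite integral_F_fst.
rewrite -(@fubini_tonelli _ _ _ _ R mu mu F mF F0) [RHS]integral_mkcond.
by apply: eq_integral => s _; rewrite integral_F_snd.
Qed.

End layer_cake.

Section symmetric.
Variables g1 g2 : R -> R.
Hypotheses (ig1 : mu.-integrable setT (fun v => (v * g1 v)%:E))
  (mg2 : measurable_fun setT g2) (g20 : forall v, (0 <= g2 v)%R)
  (g12 : forall v, g1 v = g2 (- v)).

Let idMg1 v := (v * g1 v)%:E.

Let integral_pos : \int[mu]_(v in setT) idMg1^\+ v = pos_moment g1.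
Proof.
rewrite /pos_moment [RHS]integral_mkcond; apply: eq_integral => v _.
rewrite funeposE patchE mem_setE /= in_itv /= andbT /idMg1.
have g1v0 : (0 <= g1 v)%R by rewrite g12.
case: ifPn => [v0|]; first by apply/max_idPl; rewrite lee_fin mulr_ge0.
by rewrite -ltNge => v0; apply/max_idPr; rewrite lee_fin mulr_le0_ge0 // ltW.
Qed.

Let integral_neg : \int[mu]_(v in setT) idMg1^\- v = pos_moment g2.
Proof.
transitivity (\int[mu]_(v in `]-oo, 0%R]) (- v * g1 v)%:E).
  rewrite [RHS]integral_mkcond; apply: eq_integral => v _.
  rewrite funenegE patchE mem_setE /= in_itv /= /idMg1 mulNr EFinN.
  have g1v0 : (0 <= g1 v)%R by rewrite g12.
  case: ifPn => [v0|]; first by apply/max_idPl; rewrite lee_fin oppr_ge0 mulr_le0_ge0.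
  by rewrite -ltNge => v0; apply/max_idPr; rewrite lee_fin oppr_le0 mulr_ge0 // ltW.
pose k r := (Num.max r 0 * g2 r)%:E.
have mk : measurable_fun setT k.
  by apply/measurable_EFinP; apply: measurable_funM => //; exact: measurable_maxr.
have k0 r : 0 <= k r by rewrite lee_fin mulr_ge0 // le_max lexx orbT.
transitivity (\int[mu]_(r in `[0%R, +oo[) k r); last first.
  by apply: eq_integral => r; rewrite inE /= in_itv /= andbT => r0; rewrite /k max_l.
rewrite ge0_integration_by_substitution0 //; apply: eq_integral => r.
by rewrite inE /= in_itv /= => r0; rewrite /k g12 max_l // oppr_ge0.
Qed.

Lemma integral_idM_sym :
  [/\ pos_moment g1 \is a fin_num, pos_moment g2 \is a fin_num &
      \int[mu]_(v in setT) (v * g1 v)%:E = pos_moment g1 - pos_moment g2].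
Proof.
split; last by rewrite integralE integral_pos integral_neg.
- by rewrite -integral_pos; exact: integrable_pos_fin_num _ ig1.
- by rewrite -integral_neg; exact: integrable_neg_fin_num _ ig1.
Qed.

End symmetric.
End moment.

Section chronometric.
Context {R : realType}.
Variable r : R -> R.
Hypothesis rC : is_chronometric r.

Lemma chronometric_IVT t v : 0 < t -> 0 < v -> r v < t ->
  exists2 c, 0 < c <= v & r c = t.
Proof.
have [rc _ _ /cvgryPgt r0y _] := rC; move=> t0 v0 rvt.
have /filter_ex [a [a0 av ta]] : \forall a \near 0^'+, [/\ 0 < a, a <= v & t < r a].
  near=> a; split; first by near: a; exact: nbhs_right_gt.
  - by near: a; exact: nbhs_right_le.
  - by near: a; exact: r0y.
have rav : {within `[a, v], continuous r}.
  apply: continuous_subspaceW rc => c /=; rewrite !in_itv /= andbT.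
  by move=> /andP [ac _]; exact: lt_le_trans ac.
have [c] : exists2 c, c \in `[a, v] & r c = t.
  by apply: IVT av rav _; rewrite ge_min le_max (ltW rvt) (ltW ta) orbT.
by rewrite in_itv /= => /andP [ac cv] rct; exists c; rewrite ?(lt_le_trans a0 ac).
Unshelve. all: by end_near.
Qed.

Lemma chronometric_surj t : 0 < t -> exists2 v, 0 < v & r v = t.
Proof.
have [_ _ _ _ ry0] := rC; move=> t0.
have /filter_ex [v [v0 rvt]] : \forall v \near +oo, 0 < v /\ r v < t.
  near=> v; split; first by near: v; exact: nbhs_pinfty_gt.
  by near: v; exact: cvgr_lt ry0 _ t0.
by have [c /andP [c0 _] rct] := chronometric_IVT t0 v0 rvt; exists c.
Unshelve. all: by end_near.
Qed.

Lemma chronometric_zero_right v w : 0 < v -> r v = 0 -> 0 < w -> 0 < r w -> w < v.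
Proof.
have [_ _ rdec _ _] := rC; move=> v0 rv0 w0 rw0; rewrite ltNge; apply/negP => vw.
have rw20 : 0 < r w / 2 by rewrite divr_gt0.
have rvw : r v < r w / 2 by rewrite rv0.
have [c /andP [c0 cv] rc] := chronometric_IVT rw20 v0 rvw.
have cw : c < w.
  rewrite lt_neqAle (le_trans cv vw) andbT; apply/negP => /eqP cw.
  by subst; lra.
have := rdec c w c0 cw; rewrite rc => /(_ rw20 rw0); lra.
Qed.

End chronometric.

Section rationalization.
Context {R : realType} {X : finType}.
Local Notation mu := (@lebesgue_measure R).
Variables (D : X -> X -> Prop) (p : X -> X -> R) (f : X -> X -> R -> R).
Variables (u : X -> R) (g : X -> X -> R -> R) (r : R -> R).
Hypotheses (Hp : is_SCF D p) (Hu : is_RUM u g) (rC : is_chronometric r).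
Hypothesis Hrat : rationalizes D u g r p f.

Lemma survival_rationalized a b t v : D a b -> a <> b -> 0 < t -> 0 < v -> r v = t ->
  fine (survival (g a b) v) = p a b * cdf_Rplus (f a b) t.
Proof.
move=> Dab ab t0 v0 rvt; have [gd _ _ _ _] := Hu ab.
have [pab0 pab1] := Hp Dab; have [cdf0 ratio] := Hrat Dab.
have := ratio t v t0 v0 rvt; rewrite cdf0 cdf_survival // (_ : 1 - p b a = p a b).
  by move=> <-; rewrite mulrC divfK // gt_eqF.
by rewrite -pab1 addrK.
Qed.

(* Every t > 0 is r w for some w < s, so survival at s is at most p a b * F(t),
   which tends to 0 with t. *)
Lemma survival_chronometric_zero a b s : D a b -> a <> b ->
  is_pos_density_Rplus (f a b) -> 0 < s -> r s = 0 -> survival (g a b) s = 0%E.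
Proof.
move=> Dab ab fd s0 rs0; have [gd _ _ _ _] := Hu ab; have [mg g0 _] := gd.
apply/eqP; rewrite eq_le survival_ge0 // andbT.
rewrite -(fineK (survival_fin_num gd s)) lee_fin -(mulr0 (p a b)).
apply: cvgr_to_ge (cvgM (cvg_cst (p a b)) (cdf_Rplus_cvg0 fd)) _.
near=> t; have t0 : 0 < t by near: t; exact: nbhs_right_gt.
have [w w0 rwt] := chronometric_surj rC t0.
have ws : w < s by apply: (chronometric_zero_right rC s0 rs0 w0); rewrite rwt.
rewrite /= -(survival_rationalized Dab ab t0 w0 rwt).
by rewrite fine_le ?survival_fin_num // (le_survival mg g0 (ltW ws)).
Unshelve. all: by end_near.
Qed.

Variables x y : X.
Hypotheses (Dxy : D x y) (Dyx : D y x) (xy : x <> y).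
Hypothesis fyx : is_pos_density_Rplus (f y x).

Let yx : y <> x. Proof. exact: nesym. Qed.

Lemma utility_gap :
  let S a b := (\int[mu]_(s in `]0%R, +oo[) survival (g a b) s)%E in
  [/\ S x y \is a fin_num, S y x \is a fin_num & (u x - u y)%:E = (S x y - S y x)%E].
Proof.
have [[mgxy gxy0 _] ixy Exy gsym _] := Hu xy.
have [[mgyx gyx0 _] _ _ _ _] := Hu yx.
have [] := integral_idM_sym ixy mgyx gyx0 gsym.
by rewrite -Exy !pos_moment_survival.
Qed.

Lemma survival_FSD : qFSD (p x y / p y x) (cdf_Rplus (f y x)) (cdf_Rplus (f x y)) ->
  forall s, 0 < s -> (survival (g y x) s <= survival (g x y) s)%E.
Proof.
move=> FSD s s0; have [gxy _ _ _ _] := Hu xy; have [gyx _ _ _ _] := Hu yx.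
have [_ r0 _ _ _] := rC; have [rs0|rs0] := eqVneq (r s) 0.
  by rewrite survival_chronometric_zero // survival_ge0 //; case: gxy.
have {rs0}rs0 : 0 < r s by rewrite lt_neqAle eq_sym rs0 r0.
rewrite -(fineK (survival_fin_num gxy s)) -(fineK (survival_fin_num gyx s)) lee_fin.
rewrite !(survival_rationalized _ _ rs0 s0) //.
by rewrite -ler_ratioM; [exact: FSD (ltW rs0) | case: (Hp Dyx)].
Qed.

Lemma survival_SFSD : qSFSD (p x y / p y x) (cdf_Rplus (f y x)) (cdf_Rplus (f x y)) ->
  exists2 v, 0 < v & (survival (g y x) v < survival (g x y) v)%E.
Proof.
move=> [_ [t [t0 lt_t]]]; have [gxy _ _ _ _] := Hu xy; have [gyx _ _ _ _] := Hu yx.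
have {t0}t0 : 0 < t.
  by rewrite lt_neqAle t0 andbT; apply: contraTneq lt_t => <-; rewrite !cdf_Rplus0 mulr0 ltxx.
have [v v0 rvt] := chronometric_surj rC t0; exists v => //.
rewrite -(fineK (survival_fin_num gxy v)) -(fineK (survival_fin_num gyx v)) lte_fin.
rewrite !(survival_rationalized _ _ t0 v0 rvt) //.
by rewrite -ltr_ratioM //; case: (Hp Dyx).
Qed.

End rationalization.

Theorem theorem1 (R : realType) (X : finType) (D : X -> X -> Prop)
  (HDC : forall x y, D x y -> x <> y)
  (HDsym : forall x y, D x y -> D y x)
  (HDne : exists x y, D x y)
  (p : X -> X -> R) (f : X -> X -> R -> R)
  (Hpf : is_SCF_RT D p f)
  (Hrat : exists (u : X -> R) (g : X -> X -> R -> R) (r : R -> R),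
            is_RUM_CF u g r /\ rationalizes D u g r p f)
  (x y : X) (Hxy : D x y) :
  let q := p x y / p y x in
  (qFSD q (cdf_Rplus (f y x)) (cdf_Rplus (f x y)) ->
     forall (u : X -> R) (g : X -> X -> R -> R) (r : R -> R),
       is_RUM_CF u g r -> rationalizes D u g r p f -> u y <= u x) /\
  (qSFSD q (cdf_Rplus (f y x)) (cdf_Rplus (f x y)) ->
     forall (u : X -> R) (g : X -> X -> R -> R) (r : R -> R),
       is_RUM_CF u g r -> rationalizes D u g r p f -> u y < u x).
Proof.
move=> q; have [Hp Hf] := Hpf; have Dyx := HDsym x y Hxy; have xy := HDC x y Hxy.
split=> [FSD | SFSD] u g r [Hu rC] Hr.
all: have [Sxy Syx gap] := utility_gap Hu xy.
all: have [gxy _ _ _ _] := Hu x y xy; have [gyx _ _ _ _] := Hu y x (nesym xy).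
- have le_S := survival_FSD Hp Hu rC Hr Hxy Dyx xy (Hf y x Dyx) FSD.
  rewrite -subr_ge0 -lee_fin gap subre_ge0 //.
  exact: le_integral_survival gxy gyx le_S.
- have le_S := survival_FSD Hp Hu rC Hr Hxy Dyx xy (Hf y x Dyx) SFSD.1.
  have [v v0 lt_v] := survival_SFSD Hp Hu rC Hr Hxy Dyx xy SFSD.
  rewrite -subr_gt0 -lte_fin gap sube_gt0.
  exact: lt_integral_survival gxy gyx le_S v v0 lt_v Syx.
Qed.
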